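(* Let $m\ge1$ and let $P=(p_{ij})$ be an $m\times m$ real symmetric matrix such that (A1) $p_{ij}=p_{ji}\le0$ for $i\ne j$, and (A2) $0<r_1\le\bar p_i:=\sum_{j=1}^mp_{ij}\le r_2$ for every $i$, where $r_1,r_2$ are positive constants. For $\beta\in\mathbb{R}^m$, let $\alpha\in\mathbb{R}^m$ be the solution of $P\alpha=\beta$. Then for all $i\ne j$, $$|\alpha_i-\alpha_j|\le m(m-1)\frac{r_2}{r_1}\frac{|\beta|}{|p_{ij}|+r_1},$$ where $|\beta|=\max_i|\beta_i|$. *)

From mathcomp Require Import all_boot all_order all_algebra.
Set Implicit Arguments. Unset Strict Implicit. Unset Printing Implicit Defensive.
Import Order.TTheory GRing.Theory Num.Theory.
Local Open Scope ring_scope.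

Definition supnorm (R : realFieldType) (m : nat) (b : 'cV[R]_m) : R :=
  \big[Num.max/0]_(i < m) `|b i 0|.

From mathcomp Require Import all_boot all_order all_algebra.
From mathcomp Require Import lra zify.

Set Implicit Arguments.
Unset Strict Implicit.
Unset Printing Implicit Defensive.
Import Order.TTheory GRing.Theory Num.Theory.
Local Open Scope ring_scope.

(* The sharper bound (|p_ij| + r1) |alpha_i - alpha_j| <= m |beta| holds.
   Row i of P alpha = beta reads beta_i - pbar_i alpha_i = sum_l p_il (alpha_l - alpha_i).
   Applied at a minimiser of alpha it gives the minimum principle
   r1 alpha_k >= -|beta|.  For alpha_j < alpha_i with alpha_i >= 0, sum the row
   identities over S = {k | alpha_k >= alpha_i}: by symmetry of P the flux inside S
   cancels, so the sum equals the outgoing flux, which is a sum of nonnegative terms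
   containing |p_ij| (alpha_i - alpha_j), while each of the at most m - 1 rows in S
   contributes at most |beta| - r1 alpha_i.  Adding the minimum principle at j
   gives the bound; the case alpha_i < 0 follows by replacing alpha with -alpha. *)

Lemma normr_le_supnorm (R : realFieldType) m (b : 'cV[R]_m) k :
  `|b k 0| <= supnorm b.
Proof. exact: le_bigmax. Qed.

Lemma supnorm_ge0 (R : realFieldType) m (b : 'cV[R]_m) : 0 <= supnorm b.
Proof. exact: bigmax_ge_id. Qed.

Lemma supnormN (R : realFieldType) m (b : 'cV[R]_m) : supnorm (- b) = supnorm b.
Proof. by apply: eq_bigr => i _; rewrite mxE normrN. Qed.

Lemma big_antisym_in (R : numDomainType) (T : finType) (S : {pred T})
    (g : T -> T -> R) :
  (forall k l, g l k = - g k l) -> \sum_(k in S) \sum_(l in S) g k l = 0.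
Proof.
move=> g_anti; set Y := (X in X = 0).
have YN : Y = - Y.
  rewrite /Y {1}exchange_big -sumrN; apply: eq_bigr => l _.
  by rewrite -sumrN; apply: eq_bigr => k _; rewrite g_anti.
by apply/eqP; move: (mulrn_eq0 Y 2); rewrite mulr2n {2}YN subrr eqxx.
Qed.

Section SymmetricMMatrix.

Variables (R : realFieldType) (m : nat) (P : 'M[R]_m) (r1 : R).
Hypothesis r1_gt0 : 0 < r1.
Hypothesis Psym : P^T = P.
Hypothesis P_offdiag_le0 : forall i j, i != j -> P i j <= 0.
Hypothesis rowsum_ge : forall i, r1 <= \sum_(j < m) P i j.

Lemma P_sym i j : P i j = P j i.
Proof. by rewrite -{1}Psym mxE. Qed.

Section Solution.

Variables beta alpha : 'cV[R]_m.
Hypothesis P_alpha : P *m alpha = beta.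

Let flux k l := P k l * (alpha l 0 - alpha k 0).

Lemma row_balance k :
  beta k 0 - (\sum_(l < m) P k l) * alpha k 0 = \sum_(l < m) flux k l.
Proof.
by rewrite -P_alpha mxE big_distrl -sumrB; apply: eq_bigr => l _; rewrite /flux mulrBr.
Qed.

Lemma min_principle k : - supnorm beta <= r1 * alpha k 0.
Proof.
have [k0 _ k0_min] := arg_minP (fun k => alpha k 0) (erefl (predT k)).
have flux_le0 : beta k0 0 - (\sum_(l < m) P k0 l) * alpha k0 0 <= 0.
  rewrite row_balance; apply: sumr_le0 => l _.
  have [-> | l_k0] := eqVneq l k0; first by rewrite /flux subrr mulr0.
  apply: mulr_le0_ge0; first by rewrite P_offdiag_le0 // eq_sym.
  by rewrite subr_ge0 k0_min.
have := normr_le_supnorm beta k0; rewrite ler_norml => /andP[beta_ge beta_le].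
apply: le_trans (ler_wpM2l (ltW r1_gt0) (k0_min k isT)).
have [a_ge0 | a_lt0] := lerP 0 (alpha k0 0).
  by have := mulr_ge0 (ltW r1_gt0) a_ge0; lra.
have := ler_wnM2r (ltW a_lt0) (rowsum_ge k0); lra.
Qed.

Lemma sum_row_balance_outflux (S : {pred 'I_m}) :
  \sum_(k in S) (beta k 0 - (\sum_(l < m) P k l) * alpha k 0) =
  \sum_(k in S) \sum_(l | l \notin S) flux k l.
Proof.
under eq_bigr do rewrite row_balance (bigID (mem S)) /=.
rewrite big_split /= big_antisym_in ?add0r // => k l.
by rewrite /flux P_sym; lra.
Qed.

Lemma outflux_ge (S : {pred 'I_m}) i j :
    (forall k l, k \in S -> l \notin S -> alpha l 0 <= alpha k 0) ->
    i \in S -> j \notin S ->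
  `|P i j| * (alpha i 0 - alpha j 0) <= \sum_(k in S) \sum_(l | l \notin S) flux k l.
Proof.
move=> S_upper iS jS.
have flux_ge0 k l : k \in S -> l \notin S -> 0 <= flux k l.
  move=> kS lS; apply: mulr_le0; last by rewrite subr_le0 S_upper.
  by apply: P_offdiag_le0; apply: contraNneq lS => <-.
rewrite (bigD1 i) //= (bigD1 j) //=.
have rest_i : 0 <= \sum_(l | (l \notin S) && (l != j)) flux i l.
  by apply: sumr_ge0 => l /andP[lS _]; apply: flux_ge0.
have rest : 0 <= \sum_(k in S | k != i) \sum_(l | l \notin S) flux k l.
  by apply: sumr_ge0 => k /andP[kS _]; apply: sumr_ge0 => l; apply: flux_ge0.
have ij : i != j by apply: contraNneq jS => <-.
have : `|P i j| * (alpha i 0 - alpha j 0) = flux i j.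
  by rewrite /flux ler0_norm ?P_offdiag_le0 //; lra.
lra.
Qed.

Lemma dist_bound_nonneg i j : alpha j 0 < alpha i 0 -> 0 <= alpha i 0 ->
  (`|P i j| + r1) * (alpha i 0 - alpha j 0) <= m%:R * supnorm beta.
Proof.
move=> a_ji a_i_ge0.
pose S := [pred k | alpha i 0 <= alpha k 0].
have iS : i \in S by rewrite inE /=.
have jS : j \notin S by rewrite inE /= -ltNge.
have lower : `|P i j| * (alpha i 0 - alpha j 0) <=
    \sum_(k in S) (beta k 0 - (\sum_(l < m) P k l) * alpha k 0).
  rewrite sum_row_balance_outflux; apply: outflux_ge => // k l.
  by rewrite !inE /= -ltNge => kS lS; rewrite ltW // (lt_le_trans lS kS).
set c := supnorm beta - r1 * alpha i 0.
have upper : \sum_(k in S) (beta k 0 - (\sum_(l < m) P k l) * alpha k 0) <=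
    c * #|S|%:R.
  rewrite mulr_natr -sumr_const; apply: ler_sum => k.
  rewrite inE /= => a_ik.
  have := normr_le_supnorm beta k; rewrite ler_norml => /andP[_ beta_le].
  have := ler_wpM2r (le_trans a_i_ge0 a_ik) (rowsum_ge k).
  have := ler_wpM2l (ltW r1_gt0) a_ik; rewrite /c; lra.
have S_gt0 : 1 <= #|S|%:R :> R by rewrite ler1n; apply/card_gt0P; exists i.
have S_lt_m : #|S|%:R + 1 <= m%:R :> R.
  rewrite natr1 ler_nat -addn1; have := cardC S; rewrite card_ord => cardS_C.
  rewrite -[X in (_ <= X)%N]cardS_C leq_add2l.
  by apply/card_gt0P; exists j; rewrite !inE.
have c_ge0 : 0 <= c.
  rewrite -(pmulr_lge0 _ (lt_le_trans ltr01 S_gt0)).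
  apply: le_trans upper; apply: le_trans lower.
  by rewrite mulr_ge0 // subr_ge0 ltW.
have S_le_m1 : c * #|S|%:R <= c * (m%:R - 1) by rewrite ler_wpM2l // lerBrDr.
have m2_ge0 : 0 <= (m%:R - 2) * (r1 * alpha i 0).
  by rewrite !mulr_ge0 ?(ltW r1_gt0) //; lra.
have := min_principle j; rewrite /c in S_le_m1 upper; nra.
Qed.

End Solution.

Lemma dist_bound (beta alpha : 'cV[R]_m) : P *m alpha = beta -> forall i j,
  (`|P i j| + r1) * `|alpha i 0 - alpha j 0| <= m%:R * supnorm beta.
Proof.
move=> P_alpha i j; wlog a_ji : i j / alpha j 0 <= alpha i 0.
  move=> dist_bound_ij; have [/dist_bound_ij // | /ltW a_ij] := leP (alpha j 0) (alpha i 0).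
  by rewrite P_sym distrC dist_bound_ij.
rewrite [`|alpha i 0 - _|]ger0_norm ?subr_ge0 //.
have [a_eq | a_lt] := eqVneq (alpha j 0) (alpha i 0).
  by rewrite a_eq subrr mulr0 mulr_ge0 ?supnorm_ge0.
have {a_lt}a_ji_lt : alpha j 0 < alpha i 0 by rewrite lt_neqAle a_lt.
have [a_i_ge0 | a_i_lt0] := lerP 0 (alpha i 0); first exact: dist_bound_nonneg.
have P_Nalpha : P *m (- alpha) = - beta by rewrite mulmxN P_alpha.
have := dist_bound_nonneg P_Nalpha (i := j) (j := i); rewrite !mxE supnormN P_sym.
by rewrite opprK [- _ + _]addrC; apply; lra.
Qed.

End SymmetricMMatrix.

Theorem proposition2p1 (R : realFieldType) (m : nat) (hm : (0 < m)%N)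
  (P : 'M[R]_m) (r1 r2 : R) (hr1 : 0 < r1) (hr2 : 0 < r2)
  (Psym : P^T = P)
  (A1 : forall i j : 'I_m, i != j -> P i j <= 0)
  (A2 : forall i : 'I_m, r1 <= \sum_(j < m) P i j <= r2)
  (beta alpha : 'cV[R]_m) (hsol : P *m alpha = beta) :
  forall i j : 'I_m, i != j ->
    `|alpha i 0 - alpha j 0| <=
      (m * (m - 1))%:R * (r2 / r1) * (supnorm beta / (`|P i j| + r1)).
Proof.
move=> i j ij.
have rowsum_ge k : r1 <= \sum_(l < m) P k l by case/andP: (A2 k).
have denom_gt0 : 0 < `|P i j| + r1 by rewrite ltr_wpDl.
have sharp : `|alpha i 0 - alpha j 0| <= m%:R * (supnorm beta / (`|P i j| + r1)).
  by rewrite mulrA ler_pdivlMr // mulrC; exact: dist_bound.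
apply: le_trans sharp _.
have m_gt1 : (1 < m)%N.
  rewrite ltnNge; apply: contra ij => m_le1; apply/eqP; apply: ord_inj.
  by have := ltn_ord i; have := ltn_ord j; lia.
have r1_le_r2 : r1 <= r2 by case/andP: (A2 i) => /le_trans; apply.
have factor_ge1 : 1 <= (m - 1)%:R * (r2 / r1).
  by rewrite mulr_ege1 ?ler1n ?subn_gt0 // ler_pdivlMr // mul1r.
have := mulr_ge0 (ler0n R m) (divr_ge0 (supnorm_ge0 beta) (ltW denom_gt0)).
rewrite natrM; nra.
Qed.
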